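(* Let $m,N\in\mathbb{N}$ with $N$ square-free and $\gcd(m,N)=1$. Then there exists an integer $1\leq n\leq 2N$ with $n\neq m$ and $\gcd(n,N)=1$ such that $$\left|K(m,n,N)\right|\geq \frac{\sqrt{N}}{2^{\frac12\omega(N)+1}}.$$
   Context: For integers $a,b$ and $c\ge1$, the Kloosterman sum is $K(a,b,c)=\sum_{1\le x\le c,\ \gcd(x,c)=1} e\!\left(\frac{ax+b\overline{x}}{c}\right)$, where $\overline{x}$ is the inverse of $x$ modulo $c$ and $e(z)=e^{2\pi i z}$. $\omega(N)$ denotes the number of distinct prime factors of $N$. *)

From HB Require Import structures.
From mathcomp Require Import all_boot all_order all_algebra.
From mathcomp Require Import all_classical all_reals all_analysis.
From mathcomp Require Import complex.
Set Implicit Arguments. Unset Strict Implicit. Unset Printing Implicit Defensive.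
Import Order.TTheory GRing.Theory Num.Theory.
Local Open Scope ring_scope.

Definition inv_mod (x c : nat) : nat :=
  odflt 0%N (omap val [pick y : 'I_c | (x * y == 1 %[mod c])%N]).

Definition e_ {R : realType} (z : R) : R[i] :=
  ((cos (2 * pi * z)) +i* (sin (2 * pi * z)))%C.

Definition Kloosterman {R : realType} (a b : int) (c : nat) : R[i] :=
  \sum_(1 <= x < c.+1 | coprime x c)
     e_ (((a * x%:Z + b * (inv_mod x c)%:Z)%:~R : R) / c%:R).

Definition omega (N : nat) : nat := size (primes N).

Definition squarefree (N : nat) : Prop := forall p : nat, prime p -> ~~ (p ^ 2 %| N)%N.

From HB Require Import structures.
From mathcomp Require Import all_boot all_order all_algebra.
From mathcomp Require Import all_classical all_reals all_analysis.
From mathcomp Require Import complex.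
From mathcomp Require Import ring lra zify.
Import Order.TTheory GRing.Theory Num.Theory.
Set Implicit Arguments. Unset Strict Implicit. Unset Printing Implicit Defensive.

(* For coprime c and d the Chinese remainder theorem gives the twisted
   multiplicativity K(a, b; cd) = K(a d', b d'; c) K(a c', b c'; d), where d' d = 1
   (mod c) and c' c = 1 (mod d); since the twists are invertible, b can be chosen
   modulo c and modulo d independently, so it suffices to make every prime factor
   large.  For a prime p not dividing a, orthogonality of additive characters
   gives sum_(n mod p) |K(a, n; p)|^2 = p (p - 1), and K(a, 0; p) = -1, so some n
   prime to p has |K(a, n; p)|^2 >= (p (p - 1) - 1) / (p - 1) >= p / 2.  Hence
   |K(m, n; N)|^2 >= N / 2^omega(N) for some n prime to N, which is four times
   the square of the required bound; finally n is moved into [1, 2N] within its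
   residue class so as to avoid m. *)

Lemma inv_modP x c : 0 < c -> coprime x c -> x * inv_mod x c = 1 %[mod c].
Proof.
move=> c_gt0 co_xc.
have [y xy1] : exists y : 'I_c, x * y == 1 %[mod c].
  have [x0|x_gt0] := posnP x.
    move: co_xc; rewrite x0 /coprime gcd0n => /eqP c1.
    by exists (Ordinal c_gt0); rewrite /= mul0n c1 !modn1.
  have [[u v] /= uv1] := coprimeP _ x_gt0 co_xc.
  exists (Ordinal (ltn_pmod u c_gt0)); rewrite /= modnMmr.
  have -> : x * u = v * c + 1 by lia.
  by rewrite modnMDl.
rewrite /inv_mod; case: pickP => [z /eqP // | none].
by move: (none y); rewrite xy1.
Qed.

Lemma inv_mod_mod x c : inv_mod (x %% c) c = inv_mod x c.
Proof.
rewrite /inv_mod (@eq_pick _ _ (fun y : 'I_c => x * y == 1 %[mod c])) // => y.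
by rewrite modnMml.
Qed.

Lemma modn_mul1l x y c : x = 1 %[mod c] -> x * y = y %[mod c].
Proof. by move=> x1; rewrite -modnMml x1 modnMml mul1n. Qed.

Lemma modn_mul1_uniq a x y c : a * x = 1 %[mod c] -> a * y = 1 %[mod c] -> x = y %[mod c].
Proof.
move=> ax1 ay1; rewrite -[x]mul1n -modnMml -ay1 modnMml mulnAC.
by rewrite -modnMml ax1 modnMml mul1n.
Qed.

Lemma coprime_mulmod1 x y c : x * y = 1 %[mod c] -> coprime y c.
Proof.
move=> xy1; have : coprime (x * y) c by rewrite -coprime_modl xy1 coprime_modl coprime1n.
by rewrite coprimeMl => /andP[].
Qed.

Lemma eqn_inv_mod x y c : 0 < c -> coprime x c -> coprime y c ->
  (inv_mod x c == inv_mod y c %[mod c]) = (x == y %[mod c]).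
Proof.
move=> c_gt0 co_x co_y; have x1 := inv_modP c_gt0 co_x; have y1 := inv_modP c_gt0 co_y.
apply/eqP/eqP => [inv_xy | xy].
  apply: (@modn_mul1_uniq (inv_mod y c)); last by rewrite mulnC.
  by rewrite -modnMml -inv_xy modnMml mulnC.
by apply: (modn_mul1_uniq x1); rewrite -modnMml xy modnMml.
Qed.

Lemma inv_mod_dvdm d c x : 0 < c -> d %| c -> coprime x c ->
  inv_mod x c = inv_mod x d %[mod d].
Proof.
move=> c_gt0 dc co_xc; have d_gt0 := dvdn_gt0 c_gt0 dc.
apply: (@modn_mul1_uniq x); last by apply: inv_modP => //; exact: coprime_dvdr co_xc.
by rewrite -(modn_dvdm _ dc) inv_modP // (modn_dvdm _ dc).
Qed.

Lemma modn_linear a b x1 x2 y1 y2 d :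
  x1 = x2 %[mod d] -> y1 = y2 %[mod d] -> a * x1 + b * y1 = a * x2 + b * y2 %[mod d].
Proof.
move=> x12 y12.
by rewrite -modnDm -modnMmr x12 modnMmr -[(b * y1) %% d]modnMmr y12 modnMmr modnDm.
Qed.

Lemma dvdn_addMpred a b c : 0 < c -> (c %| a + b * c.-1) = (a == b %[mod c]).
Proof.
move=> c_gt0; rewrite /dvdn.
by rewrite -[in RHS](eqn_modDr (b * c.-1)) -mulnS prednK // modnMl.
Qed.

Lemma coprime_ord_prime p (x : 'I_p) : prime p -> coprime x p = (x != 0 :> nat).
Proof.
move=> p_pr; rewrite coprime_sym prime_coprime //.
by case: x => [[|x] x_lt] //=; rewrite ?dvdn0 ?gtnNdvd.
Qed.

Lemma squarefree_dvd M N : M %| N -> squarefree N -> squarefree M.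
Proof. by move=> MN sqf p p_pr; apply: contra (sqf p p_pr) => /dvdn_trans; apply. Qed.

Lemma squarefree_coprime p M : prime p -> squarefree (p * M) -> coprime p M.
Proof.
move=> p_pr sqf; rewrite prime_coprime //; apply: contra (sqf p p_pr) => /dvdnP[q ->].
by rewrite mulnCA mulnn dvdn_mull.
Qed.

Lemma omegaM p M : prime p -> 0 < M -> coprime p M -> omega (p * M) = (omega M).+1.
Proof.
move=> p_pr M_gt0 co_pM; rewrite /omega -[(omega M).+1]/(size (p :: primes M)).
apply: perm_size; apply: uniq_perm; rewrite ?primes_uniq //=.
  by rewrite primes_uniq andbT mem_primes p_pr M_gt0 -prime_coprime.
by move=> q; rewrite (primesM _ (prime_gt0 p_pr) M_gt0) primes_prime // !inE.
Qed.

Lemma exists_residue_avoid m N n0 : 0 < N ->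
  exists n, [/\ 1 <= n <= 2 * N, n != m & n = n0 %[mod N]].
Proof.
move=> N_gt0; set r := n0 %% N; have r_lt : r < N by rewrite ltn_pmod.
have [m_eq | m_neq] := eqVneq m (r + N); last first.
  by exists (r + N); split; rewrite 1?eq_sym ?modnDr ?modn_mod //; lia.
have [r0 | r_gt0] := posnP r.
  by exists (2 * N); split; rewrite ?modnMl -/r ?r0 //; lia.
by exists r; split; rewrite ?modn_small //; lia.
Qed.

Local Open Scope ring_scope.

Lemma sum_chinese (V : pzSemiRingType) (c d : nat) (P Q : pred nat) (F G : nat -> V) :
  coprime c d -> (0 < c)%N -> (0 < d)%N ->
  \sum_(x < c * d | P (x %% c)%N && Q (x %% d)%N) F (x %% c)%N * G (x %% d)%N
    = (\sum_(i < c | P i) F i) * (\sum_(j < d | Q j) G j).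
Proof.
move=> co_cd c_gt0 d_gt0; have cd_gt0 : (0 < c * d)%N by rewrite muln_gt0 c_gt0.
pose h (x : 'I_(c * d)) : 'I_c * 'I_d :=
  (Ordinal (ltn_pmod x c_gt0), Ordinal (ltn_pmod x d_gt0)).
pose h' (ij : 'I_c * 'I_d) : 'I_(c * d) :=
  Ordinal (ltn_pmod (chinese c d ij.1 ij.2) cd_gt0).
have hK : cancel h h'.
  by move=> x; apply: val_inj; rewrite /= -(chinese_mod co_cd x) modn_small.
have h'K : cancel h' h.
  move=> [i j]; congr (_, _); apply: val_inj => /=.
    by rewrite (modn_dvdm _ (dvdn_mulr d (dvdnn c))) chinese_modl // modn_small.
  by rewrite (modn_dvdm _ (dvdn_mull c (dvdnn d))) chinese_modr // modn_small.
rewrite big_distrlr pair_big (reindex h) //=; exact: onW_bij (Bijective hK h'K).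
Qed.

Lemma sum_coprime_prime (V : zmodType) (p : nat) (F : nat -> V) : prime p ->
  \sum_(x < p | coprime x p) F x = \sum_(x < p) F x - F 0%N.
Proof.
move=> p_pr; have p_gt0 := prime_gt0 p_pr.
rewrite [X in _ = X - _](bigD1 (Ordinal p_gt0)) //= addrC addrK.
by apply: eq_bigl => x; rewrite coprime_ord_prime.
Qed.

Lemma sum_shift_period (V : zmodType) (c : nat) (G : nat -> V) : G c = G 0%N ->
  \sum_(1 <= x < c.+1) G x = \sum_(0 <= x < c) G x.
Proof.
move=> Gc; apply: (@addrI _ (G 0%N)).
by rewrite -big_ltn // big_nat_recr //= Gc addrC.
Qed.

Lemma exists_mean_le (R : numDomainType) (I : finType) (P : pred I) (F : I -> R) (i0 : I) :
  {in P, forall i, F i \is Num.real} -> P i0 ->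
  exists2 i, P i & \sum_(j | P j) F j <= #|P|%:R * F i.
Proof.
move=> F_real Pi0; case: (real_arg_maxP Pi0 F_real) => i Pi maxF; exists i => //.
by rewrite mulr_natl -sumr_const; apply: ler_sum.
Qed.

Lemma half_le_of_mean_le (F : numFieldType) (p : nat) (x : F) : (1 < p)%N ->
  (p * p.-1)%:R - 1 <= p.-1%:R * x -> p%:R / 2 <= x.
Proof.
move=> p_gt1 le_x; have p1_gt0 : 0 < p.-1%:R :> F by rewrite ltr0n; lia.
rewrite -(ler_pM2l p1_gt0); apply: le_trans le_x.
rewrite mulrA ler_pdivrMr ?ltr0n // mulrBl mul1r -!natrM -natrB ?ler_nat; nia.
Qed.

Section Kloosterman.
Variable R : realType.

Lemma eD (s t : R) : e_ (s + t) = e_ s * e_ t.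
Proof. by rewrite /e_ mulrDr cosD sinD; congr (_ +i* _)%C; ring. Qed.

Lemma e_nat (n : nat) : e_ (n%:R : R) = 1.
Proof.
elim: n => [|n IHn]; first by rewrite /e_ mulr0 cos0 sin0.
by rewrite -addn1 natrD eD IHn mul1r /e_ mulr1 mulr_natl cos2pi sin2pi.
Qed.

Lemma norm_e (t : R) : `|e_ t| = 1.
Proof. by rewrite normc_def /= cos2Dsin2 sqrtr1. Qed.

Lemma e_neq1 (t : R) : 0 < t < 1 -> e_ t != 1.
Proof.
case/andP=> t_gt0 t_lt1; apply/negP => /eqP [cos1 _].
have /sin_gt0_pi : 0 < pi * t < pi by rewrite mulr_gt0 ?pi_gt0 //= gtr_pMr ?pi_gt0.
have : cos ((pi * t) *+ 2) = 1 by rewrite -mulr_natl mulrA.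
rewrite cos_mulr2n cos2sin2; nra.
Qed.

Definition emod (c k : nat) : R[i] := e_ (k%:R / c%:R).

Lemma emod0 c : emod c 0 = 1.
Proof. by rewrite /emod mul0r (e_nat 0). Qed.

Lemma emodD c k1 k2 : emod c (k1 + k2) = emod c k1 * emod c k2.
Proof. by rewrite /emod natrD mulrDl eD. Qed.

Lemma emodX c k n : emod c k ^+ n = emod c (k * n).
Proof.
elim: n => [|n IHn]; first by rewrite muln0 emod0.
by rewrite exprS IHn mulnS emodD.
Qed.

Lemma emod_mull c q : (0 < c)%N -> emod c (q * c) = 1.
Proof. by move=> c_gt0; rewrite /emod natrM mulfK ?e_nat // pnatr_eq0 -lt0n. Qed.

Lemma emod_congr c k1 k2 : (0 < c)%N -> (k1 = k2 %[mod c])%N -> emod c k1 = emod c k2.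
Proof.
move=> c_gt0 k12.
by rewrite (divn_eq k1 c) (divn_eq k2 c) !emodD !emod_mull // !mul1r k12.
Qed.

Lemma conj_emod c k : (0 < c)%N -> (emod c k)^* = emod c (k * c.-1).
Proof.
move=> c_gt0; have kc1 : emod c k * emod c (k * c.-1) = 1.
  by rewrite -emodD -{1}[k]muln1 -mulnDr add1n prednK // emod_mull.
by rewrite -[LHS]mul1r -kc1 mulrAC -normCK norm_e expr1n mul1r.
Qed.

Lemma sum_emod c k : (0 < c)%N ->
  \sum_(n < c) emod c (n * k) = if (c %| k)%N then c%:R else 0.
Proof.
move=> c_gt0; case: ifPn => [/dvdnP[q ->] | ndvd].
  by rewrite (eq_bigr (fun=> 1)) ?sumr_const ?card_ord // => n _; rewrite mulnA emod_mull.
have z_neq1 : emod c k != 1.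
  rewrite -(emod_congr c_gt0 (modn_mod k c)); apply: e_neq1.
  rewrite divr_gt0 ?ltr0n // ?lt0n -?/(dvdn c k) //= ltr_pdivrMr ?ltr0n // mul1r ltr_nat.
  exact: ltn_pmod.
have : (emod c k - 1) * \sum_(n < c) emod c k ^+ n = 0.
  by rewrite -subrX1 emodX emod_mull // subrr.
move/eqP; rewrite mulf_eq0 subr_eq0 (negbTE z_neq1) /= => /eqP geo0.
by rewrite -[RHS]geo0; apply: eq_bigr => n _; rewrite emodX mulnC.
Qed.

Lemma emod_crt c d u v k : (0 < c)%N -> (0 < d)%N ->
  (u * d + v * c = 1 %[mod c * d])%N -> emod (c * d) k = emod c (u * k) * emod d (v * k).
Proof.
move=> c_gt0 d_gt0 uv1; have cd_gt0 : (0 < c * d)%N by rewrite muln_gt0 c_gt0.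
rewrite /emod -eD.
have -> : (u * k)%:R / c%:R + (v * k)%:R / d%:R
          = (k * (u * d + v * c))%:R / (c * d)%:R :> R.
  by rewrite !natrM natrD !natrM; field; rewrite !pnatr_eq0 -!lt0n c_gt0 d_gt0.
by apply: (emod_congr cd_gt0); rewrite -modnMmr uv1 modnMmr muln1.
Qed.

Definition kl_term (a b c x : nat) : R[i] := emod c (a * x + b * inv_mod x c).

Definition kl (a b c : nat) : R[i] := \sum_(x < c | coprime x c) kl_term a b c x.

Lemma kl_congr a b1 b2 c : (0 < c)%N -> (b1 = b2 %[mod c])%N -> kl a b1 c = kl a b2 c.
Proof.
move=> c_gt0 b12; apply: eq_bigr => x _; apply: (emod_congr c_gt0).
by rewrite -modnDmr -modnMml b12 modnMml modnDmr.
Qed.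

Lemma kl1 a b : kl a b 1 = 1.
Proof. by rewrite /kl big_mkcond big_ord1 /kl_term (@emod_congr _ _ 0) ?emod0 // !modn1. Qed.

Lemma klM a b c d : coprime c d -> (0 < c)%N -> (0 < d)%N ->
  kl a b (c * d) = kl (inv_mod d c * a) (inv_mod d c * b) c
                 * kl (inv_mod c d * a) (inv_mod c d * b) d.
Proof.
move=> co_cd c_gt0 d_gt0; set u := inv_mod d c; set v := inv_mod c d.
have uv1 : (u * d + v * c = 1 %[mod c * d])%N.
  apply/eqP; rewrite chinese_remainder //; apply/andP; split; apply/eqP.
    by rewrite addnC modnMDl mulnC inv_modP // coprime_sym.
  by rewrite modnMDl mulnC inv_modP.
rewrite /kl -(sum_chinese (coprime^~ c) (coprime^~ d)) //.
apply: eq_big => [x | x co_x]; first by rewrite /= !coprime_modl coprimeMr.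
have [co_xc co_xd] : coprime x c /\ coprime x d by apply/andP; rewrite -coprimeMr.
rewrite /kl_term (emod_crt _ c_gt0 d_gt0 uv1) !mulnDr !mulnA !inv_mod_mod.
congr (_ * _); apply: emod_congr => //; apply: modn_linear; rewrite ?modn_mod //.
  by rewrite inv_mod_dvdm ?muln_gt0 ?c_gt0 ?dvdn_mulr.
by rewrite inv_mod_dvdm ?muln_gt0 ?c_gt0 ?dvdn_mull.
Qed.

Lemma kl0_prime a p : prime p -> coprime a p -> kl a 0 p = -1.
Proof.
move=> p_pr co_ap; have p_gt0 := prime_gt0 p_pr.
rewrite /kl (sum_coprime_prime (kl_term a 0 p)) //.
have -> : \sum_(x < p) kl_term a 0 p x = 0.
  have ndvd_pa : ~~ (p %| a)%N by rewrite -prime_coprime // coprime_sym.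
  rewrite -[RHS](ifN (p%:R : R[i]) _ ndvd_pa) -sum_emod //.
  by apply: eq_bigr => x _; rewrite /kl_term mul0n addn0 mulnC.
by rewrite /kl_term !muln0 emod0 sub0r.
Qed.

Lemma sum_sqr_norm_kl a p : prime p -> \sum_(n < p) `|kl a n p| ^+ 2 = (p * p.-1)%:R.
Proof.
move=> p_pr; have p_gt0 := prime_gt0 p_pr.
(* p.-1 stands for -1 modulo p, which keeps all the arguments of emod in nat. *)
pose T n x y :=
  emod p (a * x + a * y * p.-1) * emod p (n * (inv_mod x p + inv_mod y p * p.-1)).
have expand n : `|kl a n p| ^+ 2
    = \sum_(x < p | coprime x p) \sum_(y < p | coprime y p) T n x y.
  rewrite normCK /kl rmorph_sum /= big_distrlr.
  apply: eq_bigr => x _; apply: eq_bigr => y _ /=.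
  by rewrite /T /kl_term conj_emod // -!emodD mulnDl mulnDr !mulnA; congr (emod _ _); lia.
have orth (x y : 'I_p) : coprime x p -> coprime y p ->
    \sum_(n < p) T n x y = if x == y then p%:R else 0.
  move=> co_x co_y; rewrite -big_distrr /= sum_emod // dvdn_addMpred // eqn_inv_mod //.
  rewrite !modn_small // val_eqE; case: eqVneq => [<- | _]; last by rewrite mulr0.
  by rewrite -{1}[(a * x)%N]muln1 -mulnDr add1n prednK // emod_mull // mul1r.
under eq_bigr do rewrite expand.
rewrite exchange_big (eq_bigr (fun=> p%:R)) /= => [|x co_x]; last first.
  rewrite exchange_big (bigD1 x) //= orth // eqxx big1 ?addr0 // => y /andP[co_y].
  by rewrite orth // eq_sym => /negbTE ->.
rewrite (sum_coprime_prime (fun=> p%:R)) // sumr_const card_ord -[p%:R *+ p]mulr_natr.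
by rewrite -natrM -natrB ?leq_pmulr // -subn1 mulnBr muln1.
Qed.

Lemma kl_prime_large a p : prime p -> coprime a p ->
  exists2 n, coprime n p & p%:R / 2 <= `|kl a n p| ^+ 2.
Proof.
move=> p_pr co_ap; have p_gt1 := prime_gt1 p_pr.
have sum_cop : \sum_(n < p | coprime n p) `|kl a n p| ^+ 2 = (p * p.-1)%:R - 1.
  rewrite (sum_coprime_prime (fun n => `|kl a n p| ^+ 2)) // sum_sqr_norm_kl //.
  by rewrite kl0_prime // normrN normr1 expr1n.
have card_cop : #|[pred n : 'I_p | coprime n p]|%:R = p.-1%:R :> R[i].
  rewrite -sumr_const (sum_coprime_prime (fun=> 1)) // sumr_const card_ord.
  by rewrite -subn1 natrB ?prime_gt0.
have [|n co_n] := @exists_mean_le _ _ [pred n : 'I_p | coprime n p]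
  (fun n => `|kl a n p| ^+ 2) (Ordinal p_gt1) _ (coprime1n p).
  by move=> n _; rewrite realX ?normr_real.
by rewrite sum_cop card_cop => /(half_le_of_mean_le p_gt1); exists n.
Qed.

Lemma kl_squarefree_large a N : (0 < N)%N -> squarefree N -> coprime a N ->
  exists2 n, coprime n N & N%:R / 2 ^+ omega N <= `|kl a n N| ^+ 2.
Proof.
elim/ltn_ind: N a => N IHN a N_gt0 sqf co_aN.
have [N_le1 | N_gt1] := leqP N 1.
  have -> : N = 1%N by lia.
  by exists 0%N; rewrite // kl1 normr1 expr1n divr1.
have p_pr := pdiv_prime N_gt1; set p := pdiv N in p_pr; set M := (N %/ p)%N.
have NpM : N = (p * M)%N by rewrite /M mulnC divnK // pdiv_dvd.
have M_gt0 : (0 < M)%N by move: N_gt0; rewrite NpM muln_gt0 => /andP[].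
have co_pM : coprime p M by apply: squarefree_coprime; rewrite // -NpM.
move: co_aN; rewrite NpM coprimeMr => /andP[co_ap co_aM].
set u := inv_mod M p; set v := inv_mod p M.
have Mu1 : (M * u = 1 %[mod p])%N by rewrite inv_modP ?prime_gt0 // coprime_sym.
have pv1 : (p * v = 1 %[mod M])%N by rewrite inv_modP.
have [n1 co_n1 large1] : exists2 n1, coprime n1 p & p%:R / 2 <= `|kl (u * a) n1 p| ^+ 2.
  by apply: kl_prime_large; rewrite // coprimeMl co_ap (coprime_mulmod1 Mu1).
have [n2 co_n2 large2] :
    exists2 n2, coprime n2 M & M%:R / 2 ^+ omega M <= `|kl (v * a) n2 M| ^+ 2.
  apply: IHN; rewrite ?coprimeMl ?co_aM ?(coprime_mulmod1 pv1) //.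
    by rewrite NpM ltn_Pmull ?prime_gt1.
  by apply: squarefree_dvd sqf; rewrite NpM dvdn_mull.
set n := chinese p M (M * n1) (p * n2).
have n_p : (n = M * n1 %[mod p])%N by rewrite chinese_modl.
have n_M : (n = p * n2 %[mod M])%N by rewrite chinese_modr.
exists n.
  rewrite coprimeMr -coprime_modl n_p coprime_modl -[coprime n M]coprime_modl n_M.
  by rewrite coprime_modl !coprimeMl co_n1 co_n2 coprime_sym co_pM.
rewrite omegaM // exprS natrM invfM mulrACA (klM _ _ co_pM (prime_gt0 p_pr) M_gt0) -/u -/v.
rewrite (@normrM _ (kl _ _ _)) exprMn.
rewrite (kl_congr _ (prime_gt0 p_pr) (_ : u * n = n1 %[mod p])%N); last first.
  by rewrite -modnMmr n_p modnMmr mulnA [(u * M)%N]mulnC modn_mul1l.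
rewrite (kl_congr _ M_gt0 (_ : v * n = n2 %[mod M])%N); last first.
  by rewrite -modnMmr n_M modnMmr mulnA [(v * p)%N]mulnC modn_mul1l.
by apply: ler_pM; rewrite ?divr_ge0 ?exprn_ge0 ?ler0n.
Qed.

Lemma KloostermanE (a b c : nat) : (0 < c)%N -> Kloosterman a%:Z b%:Z c = kl a b c :> R[i].
Proof.
move=> c_gt0; rewrite /Kloosterman big_mkcond sum_shift_period /=.
  rewrite big_mkord /kl [RHS]big_mkcond; apply: eq_bigr => x _.
  by rewrite -!PoszM -PoszD.
rewrite /coprime gcdnn gcd0n; case: ifP => // _.
rewrite -!PoszM -PoszD; apply: emod_congr => //; apply: modn_linear; rewrite ?modnn ?mod0n //.
by rewrite -inv_mod_mod modnn.
Qed.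

Lemma sqrt_div_le_norm (N w : nat) (z : R[i]) : N%:R / 2 ^+ w <= `|z| ^+ 2 ->
  (Num.sqrt (N%:R : R) / powR 2 (w%:R / 2 + 1))%:C%C <= `|z|.
Proof.
move=> le_z; set P := powR 2 _; have P_gt0 : 0 < P by rewrite powR_gt0.
have P2 : P ^+ 2 = 2 ^+ w * 4.
  rewrite expr2 -powRD; last by rewrite pnatr_eq0 implybT.
  have -> : w%:R / 2 + 1 + (w%:R / 2 + 1) = (w + 2)%:R :> R by rewrite natrD; field.
  by rewrite powR_mulrn ?ler0n // exprD expr2 -natrM.
have A_ge0 : 0 <= Num.sqrt (N%:R : R) / P by rewrite divr_ge0 ?sqrtr_ge0 ?ltW.
rewrite -(@ler_pXn2r _ 2) ?nnegrE ?normr_ge0 ?ler0c //; apply: le_trans le_z.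
have -> : N%:R / 2 ^+ w = (N%:R / 2 ^+ w : R)%:C%C.
  by rewrite rmorphM fmorphV rmorphXn !rmorph_nat.
rewrite -rmorphXn lecR expr_div_n sqr_sqrtr ?ler0n // P2 invfM mulrA.
have : 0 <= N%:R / 2 ^+ w :> R by rewrite divr_ge0 ?exprn_ge0 ?ler0n.
lra.
Qed.

End Kloosterman.

(* Otherwise m and N would become implicit arguments of lemma3. *)
Unset Implicit Arguments. Set Strict Implicit.

Theorem lemma3 (R : realType) (m N : nat) :
  (0 < m)%N -> (0 < N)%N -> squarefree N -> coprime m N ->
  exists n : nat,
    [/\ (1 <= n <= 2 * N)%N, n != m, coprime n N &
      ((Num.sqrt (N%:R : R) / powR 2 ((omega N)%:R / 2 + 1))%:C%C
         <= `| @Kloosterman R m%:Z n%:Z N |)].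
Proof.
move=> _ N_gt0 sqf co_mN.
have [n0 co_n0 large] := kl_squarefree_large R N_gt0 sqf co_mN.
have [n [n_range n_neq_m n_n0]] := exists_residue_avoid m n0 N_gt0.
exists n; split => //; first by rewrite -coprime_modl n_n0 coprime_modl.
by rewrite KloostermanE // (kl_congr _ _ N_gt0 n_n0); apply: sqrt_div_le_norm.
Qed.
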